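(* Let $(\Omega,\mathcal{F})$ be a measurable space, $\mathrm{B}_b$ the space of bounded real-valued measurable functions on $\Omega$, and let $H\colon\mathrm{B}_b\to\mathbb{R}$ be a convex premium principle which is continuous from above, i.e. $\inf_{n\in\mathbb{N}}H(X_n)=0$ for every sequence $(X_n)_{n\in\mathbb{N}}\subset\mathrm{B}_b$ with $X_{n+1}\le X_n$ for all $n$ and $\inf_{n}X_n=0$ pointwise. Then $R_{\mathrm{Max}}(X):=\inf\{H(X_0)\mid X_0\in\mathrm{B}_b,\ X_0\ge X\}$ is continuous from above in the same sense, and every element of $\mathcal{P}:=\{\mathbb{P}\in\mathrm{ba}_+^1\mid H^*(\mathbb{P})<\infty\}$ is countably additive.
   Context: A premium principle is a map $H\colon\mathrm{B}_b\to\mathbb{R}$ with $H(X+m)=H(X)+m$ for $m\in\mathbb{R}$, $H(0)=0$, and $H(X)\ge0$ for $X\ge0$ (pointwise order). Convex means $H(\lambda X+(1-\lambda)Y)\le\lambda H(X)+(1-\lambda)H(Y)$ for $\lambda\in[0,1]$. $\mathrm{ba}_+^1$ is the set of finitely additive probability measures on $(\Omega,\mathcal{F})$, $\mathbb{E}_{\mathbb{P}}$ the associated integral, and $H^*(\mathbb{P}):=\sup_{X\in\mathrm{B}_b}(\mathbb{E}_{\mathbb{P}}(X)-H(X))$. *)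

From HB Require Import structures.
From mathcomp Require Import all_boot all_order all_algebra.
From mathcomp Require Import all_classical all_reals all_analysis.
Set Implicit Arguments. Unset Strict Implicit. Unset Printing Implicit Defensive.
Import Order.TTheory GRing.Theory Num.Theory numFieldNormedType.Exports.
Local Open Scope classical_set_scope.
Local Open Scope ring_scope.

Section Defs.
Context {d : measure_display} {T : measurableType d} {R : realType}.

Definition Bb (X : T -> R) : Prop :=
  measurable_fun setT X /\ exists M : R, forall w, `|X w| <= M.

Definition premium_principle (H : (T -> R) -> R) : Prop :=
  [/\ (forall X (m : R), Bb X -> H (X \+ cst m) = H X + m),
      H (cst 0) = 0 &
      (forall X, Bb X -> (forall w, 0 <= X w) -> 0 <= H X)].

Definition convex_pp (H : (T -> R) -> R) : Prop :=
  forall X Y (l : R), Bb X -> Bb Y -> 0 <= l <= 1 ->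
    H (fun w => l * X w + (1 - l) * Y w) <= l * H X + (1 - l) * H Y.

Definition is_inf_seq (u : nat -> R) (l : R) : Prop :=
  (forall n, l <= u n) /\ (forall e : R, 0 < e -> exists n, u n < l + e).

Definition cont_from_above (H : (T -> R) -> R) : Prop :=
  forall Xs : nat -> T -> R, (forall n, Bb (Xs n)) ->
    (forall n w, Xs n.+1 w <= Xs n w) ->
    (forall w, is_inf_seq (fun n => Xs n w) 0) ->
    is_inf_seq (fun n => H (Xs n)) 0.

Definition R_Max (H : (T -> R) -> R) (X : T -> R) : R :=
  inf [set H X0 | X0 in [set X0 | Bb X0 /\ forall w, X w <= X0 w]].

Definition ba1 (mu : set T -> R) : Prop :=
  [/\ (forall A, measurable A -> 0 <= mu A),
      mu setT = 1 &
      (forall A B, measurable A -> measurable B -> A `&` B = set0 ->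
         mu (A `|` B) = mu A + mu B)].

(* E_P: integral of a bounded measurable function w.r.t. a finitely
   additive measure, as supremum of integrals of measurable simple
   functions lying below X *)
Definition simple_below (X : T -> R) (s : seq (R * set T)) : Prop :=
  (forall p, p \in s -> measurable p.2) /\
  (forall w, \sum_(p <- s) p.1 * \1_(p.2) w <= X w).

Definition ba_integral (mu : set T -> R) (X : T -> R) : R :=
  sup [set \sum_(p <- s) p.1 * mu p.2 | s in simple_below X].

(* H^*(P) < oo *)
Definition finite_penalty (H : (T -> R) -> R) (mu : set T -> R) : Prop :=
  exists c : R, forall X, Bb X -> ba_integral mu X - H X <= c.

Definition countably_additive (mu : set T -> R) : Prop :=
  forall F : nat -> set T, (forall n, measurable (F n)) ->
    trivIset setT F ->
    (fun n => \sum_(i < n) mu (F i)) @ \oo --> (mu (\bigcup_n F n) : R^o).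

End Defs.

From mathcomp Require Import all_boot all_order all_algebra.
From mathcomp Require Import all_classical all_reals all_analysis.
From mathcomp Require Import lra.
Local Open Scope classical_set_scope.
Local Open Scope ring_scope.
Import Order.TTheory GRing.Theory Num.Theory numFieldNormedType.Exports.

(* R_Max is squeezed between 0 and H on nonnegative positions, so it inherits
   continuity from above from H.  For a finitely additive probability P with
   penalty bounded by c, the lower estimate E_P[l 1_A] >= l P(A) gives
   l P(A) <= c + H(l 1_A) for every l >= 0.  Along measurable sets G_n
   decreasing to the empty set, continuity from above of H makes
   H(l 1_(G_n)) eventually small, so P(G_n) <= (c + 1) / l eventually for
   every l: P is continuous at the empty set, hence countably additive. *)

Section FinitelyAdditive.
Context {d : measure_display} {T : measurableType d} {R : realType}.

Definition ba_continuous_at_set0 (mu : set T -> R) :=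
  forall G : nat -> set T, (forall n, measurable (G n)) ->
    {homo G : m n / (m <= n)%N >-> n `<=` m} -> \bigcap_n G n = set0 ->
    mu \o G @ \oo --> 0.

Context {mu : set T -> R} (hmu : ba1 mu).

Lemma ba1_ge0 A : measurable A -> 0 <= mu A.
Proof. by case: hmu => + _ _; apply. Qed.

Lemma ba1_set0 : mu set0 = 0.
Proof.
case: hmu => _ _ /(_ set0 set0 measurable0 measurable0 (setI0 _)).
by rewrite setU0 -{1}[mu set0]addr0 => /addrI <-.
Qed.

Lemma ba1_setU A B : measurable A -> measurable B -> A `&` B = set0 ->
  mu (A `|` B) = mu A + mu B.
Proof. by case: hmu => _ _; apply. Qed.

Lemma ba1_splitD {X A} : measurable X -> measurable A ->
  mu X = mu (X `&` A) + mu (X `\` A).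
Proof.
move=> mX mA; rewrite -ba1_setU ?setUIDK //; first exact: measurableI.
  exact: measurableD.
by rewrite setDE setIACA setICr setI0.
Qed.

Lemma ba1_le A B : measurable A -> measurable B -> A `<=` B -> mu A <= mu B.
Proof.
move=> mA mB AB; rewrite (ba1_splitD mB mA) (setIidr AB) lerDl.
exact/ba1_ge0/measurableD.
Qed.

Lemma ba1_sum_bigcup (F : nat -> set T) n : (forall k, measurable (F k)) ->
  trivIset setT F -> \sum_(i < n) mu (F i) = mu (\bigcup_(i < n) F i).
Proof.
move=> mF tF; rewrite bigcup_mkord; elim: n => [|n IHn].
  by rewrite !big_ord0 ba1_set0.
rewrite !big_ord_recr /= IHn ba1_setU //; first exact: bigsetU_measurable.
by apply: (@trivIset_bigsetUI _ xpredT) => // i j _ _; apply: tF.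
Qed.

Lemma ba1_simple_sum_le (s : seq (R * set T)) B M :
  (forall p, p \in s -> measurable p.2) -> measurable B ->
  (forall w, B w -> \sum_(p <- s) p.1 * \1_(p.2) w <= M) ->
  \sum_(p <- s) p.1 * mu (p.2 `&` B) <= M * mu B.
Proof.
elim: s B M => [|[c A] s IHs] B M ms mB sM.
  rewrite big_nil; have [M0|M0] := leP 0 M; first exact/mulr_ge0/ba1_ge0.
  suff -> : B = set0 by rewrite ba1_set0 mulr0.
  apply/seteqP; split=> // w /sM; rewrite big_nil => /(lt_le_trans M0).
  by rewrite ltxx.
have mA : measurable A by apply: (ms (c, A)); rewrite mem_head.
have {}ms p : p \in s -> measurable p.2.
  by move=> ps; apply: ms; rewrite in_cons ps orbT.
have sBA : \sum_(p <- s) p.1 * mu (p.2 `&` (B `&` A)) <= (M - c) * mu (B `&` A).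
  apply: IHs => // [|w [/sM + Aw]]; first exact: measurableI.
  by rewrite big_cons /= indicE mem_set // mulr1; lra.
have sBnA : \sum_(p <- s) p.1 * mu (p.2 `&` (B `\` A)) <= M * mu (B `\` A).
  apply: IHs => // [|w [/sM + nAw]]; first exact: measurableD.
  by rewrite big_cons /= indicE memNset // mulr0 add0r.
have split_s : \sum_(p <- s) p.1 * mu (p.2 `&` B) =
    \sum_(p <- s) p.1 * mu (p.2 `&` (B `&` A)) +
    \sum_(p <- s) p.1 * mu (p.2 `&` (B `\` A)).
  rewrite -big_split /= !big_seq; apply: eq_bigr => p ps.
  by rewrite -mulrDr setIA setIDA -ba1_splitD //; apply: measurableI (ms _ ps) mB.
rewrite big_cons /= split_s (ba1_splitD mB mA) setIC.
move: sBA sBnA; rewrite mulrBl mulrDr; lra.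
Qed.

Lemma ba_integral_indic_ge (l : R) A : 0 <= l -> measurable A ->
  l * mu A <= ba_integral mu (fun w => l * \1_A w).
Proof.
move=> l0 mA; apply: ub_le_sup.
  exists l => _ [s [ms sA] <-].
  have := @ba1_simple_sum_le s setT l ms measurableT.
  case: hmu => _ -> _; rewrite mulr1; under eq_bigr do rewrite setIT.
  apply=> w _; apply: le_trans (sA w) _.
  by rewrite indicE; case: (w \in A); rewrite ?mulr1 ?mulr0.
exists [:: (l, A)]; last by rewrite big_seq1.
split=> [p|w]; last by rewrite big_seq1.
by rewrite mem_seq1 => /eqP ->.
Qed.

Lemma ba1_countably_additive : ba_continuous_at_set0 mu -> countably_additive mu.
Proof.
move=> mu_cont F mF tF.
pose U := \bigcup_n F n; pose G n := U `\` \bigcup_(i < n) F i.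
have mU : measurable U by exact: bigcupT_measurable.
have mUn n : measurable (\bigcup_(i < n) F i) by exact: bigcup_measurable.
have mG n : measurable (G n) by exact: measurableD.
have G_antitone : {homo G : m n / (m <= n)%N >-> n `<=` m}.
  move=> m n mn w [Uw nFw]; split=> [//|[i /= im Fi]]; apply: nFw.
  by exists i => //=; apply: leq_trans mn.
have G_empty : \bigcap_n G n = set0.
  rewrite -subset0 => w Gw; have [[k _ Fk] _] := Gw 0%N I.
  by have [_] := Gw k.+1 I; apply; exists k => /=.
have sumE n : \sum_(i < n) mu (F i) = mu U - mu (G n).
  rewrite ba1_sum_bigcup // (ba1_splitD mU (mUn n)) addrK.
  by rewrite setIidr // => w [i _ Fi]; exists i.
apply: (cvg_sub0 _ (cvg_cst (mu U))).
have -> : (fun n => \sum_(i < n) mu (F i)) - cst (mu U) = - (mu \o G).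
  by apply/funext => n; rewrite !fctE sumE addrAC subrr add0r.
by rewrite -oppr0; apply: cvgN; apply: mu_cont.
Qed.

End FinitelyAdditive.

Section PremiumPrinciple.
Context {d : measure_display} {T : measurableType d} {R : realType}.
Variable H : (T -> R) -> R.

Lemma Bb_scale_indic (l : R) (A : set T) : measurable A ->
  Bb (fun w => l * \1_A w).
Proof.
move=> mA; split.
  exact/measurable_realfun.measurable_funM/measurable_realfun.measurable_indic.
exists `|l| => w; rewrite normrM indicE.
by case: (w \in A); rewrite ?normr1 ?normr0 ?mulr1 ?mulr0.
Qed.

Lemma scale_indic_ge0 (l : R) (A : set T) w : 0 <= l -> 0 <= l * \1_A w.
Proof. by move=> l0; rewrite mulr_ge0 // indicE ler0n. Qed.

Lemma ba1_scale_indic_le {mu c} {l : R} {A} : ba1 mu ->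
  (forall X, Bb X -> ba_integral mu X - H X <= c) -> 0 <= l -> measurable A ->
  l * mu A <= c + H (fun w => l * \1_A w).
Proof.
move=> hmu hc l0 mA.
have := ba_integral_indic_ge hmu l A l0 mA.
have := hc _ (Bb_scale_indic l A mA); lra.
Qed.

Lemma finite_penalty_continuous_at_set0 mu : ba1 mu -> cont_from_above H ->
  finite_penalty H mu -> ba_continuous_at_set0 mu.
Proof.
move=> hmu Hcont [c hc] G mG G_antitone G_empty.
apply/cvgrPdist_lt => e e0.
pose l := (`|c| + 1) / e.
have l0 : 0 < l by rewrite divr_gt0 // ltr_wpDl.
have l_e : l * e = `|c| + 1 by rewrite mulfVK ?gt_eqF.
pose Xs n w := l * \1_(G n) w.
have Xs_decr n w : Xs n.+1 w <= Xs n w.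
  rewrite /Xs !indicE; have [/set_mem Gw|_] := boolP (w \in G n.+1).
    by rewrite mem_set //; apply: G_antitone Gw.
  by rewrite mulr0 -indicE scale_indic_ge0 // ltW.
have Xs_inf w : is_inf_seq (fun n => Xs n w) 0.
  split=> [n|e' e'0]; first exact/scale_indic_ge0/ltW.
  have [N GNw] : exists N, ~ G N w.
    apply/existsNP => allG; suff : (\bigcap_n G n) w by rewrite G_empty.
    by move=> n _; apply: allG.
  by exists N; rewrite /Xs indicE memNset // mulr0 add0r.
have [_ /(_ 1 ltr01) [N HXsN]] :=
  Hcont Xs (fun n => Bb_scale_indic l _ (mG n)) Xs_decr Xs_inf.
have muGN : mu (G N) < e.
  rewrite -(ltr_pM2l l0) l_e.
  (* l * mu (G N) <= c + H (Xs N) < c + 1 <= l * e *)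
  apply: le_lt_trans (ba1_scale_indic_le hmu hc (ltW l0) (mG N)) _.
  by move: HXsN; rewrite add0r; have := ler_norm c; lra.
near=> n; rewrite sub0r normrN ger0_norm ?ba1_ge0 //.
apply: le_lt_trans muGN; apply: ba1_le => //; apply: G_antitone.
by near: n; exists N.
Unshelve. all: by end_near.
Qed.

End PremiumPrinciple.

Lemma is_inf_seq0_le {R : realType} (u v : nat -> R) :
  (forall n, 0 <= v n <= u n) -> is_inf_seq u 0 -> is_inf_seq v 0.
Proof.
move=> vu [_ u_inf]; split=> [n|e /u_inf [n un]]; first by have /andP[] := vu n.
by exists n; have /andP[_ /le_lt_trans] := vu n; apply.
Qed.

Section MaxRisk.
Context {d : measure_display} {T : measurableType d} {R : realType}.
Variable H : (T -> R) -> R.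
Hypothesis H_ge0 : forall X, Bb X -> (forall w, 0 <= X w) -> 0 <= H X.

Lemma R_Max_ge0_le X : Bb X -> (forall w, 0 <= X w) ->
  0 <= R_Max H X <= H X.
Proof.
move=> BbX X0.
have lb0 : lbound [set H X0 | X0 in [set X0 | Bb X0 /\ forall w, X w <= X0 w]] 0.
  by move=> _ [Y [BbY XY] <-]; apply: H_ge0 => // w; apply: le_trans (X0 w) (XY w).
apply/andP; split; first by apply: lb_le_inf lb0; exists (H X), X.
by apply: ge_inf; [exists 0 | exists X].
Qed.

Lemma R_Max_cont_from_above : cont_from_above H -> cont_from_above (R_Max H).
Proof.
move=> Hcont Xs BbXs Xs_decr Xs_inf.
apply: is_inf_seq0_le (Hcont Xs BbXs Xs_decr Xs_inf) => n.
by apply: R_Max_ge0_le => // w; have [] := Xs_inf w.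
Qed.

End MaxRisk.

Theorem corollary3p2 (d : measure_display) (T : measurableType d)
  (R : realType) (H : (T -> R) -> R) :
  premium_principle H -> convex_pp H -> cont_from_above H ->
  cont_from_above (R_Max H) /\
  (forall mu : set T -> R, ba1 mu -> finite_penalty H mu ->
     countably_additive mu).
Proof.
move=> [_ _ H_ge0] _ Hcont; split; first exact: R_Max_cont_from_above.
move=> mu hmu pen_mu; apply: (ba1_countably_additive hmu).
exact: finite_penalty_continuous_at_set0 H mu hmu Hcont pen_mu.
Qed.
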